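(* Let $r\ge3$ be odd. For any $n\ge r$ and $A>0$, there exists $f\in C^r[-1,1]$ with $f\le0$ on $[-1,0]$ and $f\ge0$ on $[0,1]$, such that every algebraic polynomial $P_n$ of degree $\le n$ with $P_n\le0$ on $(-1/n,0)$ and $P_n^{(i)}(0)=f^{(i)}(0)$ for $0\le i\le r$ obeys $$\|f-P_n\|>A\,\|f^{(r)}\|.$$
   Context: $\|\cdot\|$ is the sup norm on $[-1,1]$. *)

From Stdlib Require Import Reals Lra.
From Coquelicot Require Import Coquelicot.
Open Scope R_scope.

Definition Cr (r : nat) (f : R -> R) : Prop :=
  (forall (k : nat) (x : R), (k <= r)%nat -> ex_derive_n f k x) /\
  (forall x : R, continuous (Derive_n f r) x).

Definition poly_eval (n : nat) (a : nat -> R) (x : R) : R :=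
  sum_f_R0 (fun k => a k * x ^ k) n.

Definition supnorm (g : R -> R) : R :=
  real (Lub_Rbar (fun y => exists x, -1 <= x <= 1 /\ y = Rabs (g x))).

From Stdlib Require Import Reals Lra Lia Factorial.
From Coquelicot Require Import Coquelicot.
Open Scope R_scope.

(* Write r = p + 3 with p even and let phi(u) = sin(u - p pi/2) - T(u) + 8 u^r / (9 r!), where T
   is the Taylor polynomial of degree p of the sine term.  Then phi vanishes to order p at 0 and
   phi^(p+1)(u) = cos u + 4u^2/9 >= 0, so phi has the sign of u (p + 1 is odd), while
   phi^(r) = 8/9 - cos is bounded by 2 and phi^(r)(0) = -1/9.  The counterexample is
   f(x) = d^r phi(x/d) for a small d chosen after n and A.

   Let P match the r-jet of f at 0 and suppose ||f - P|| <= A ||f^(r)|| <= 2A.  Write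
   P = T_r f + x^(r+1) Q.  Taylor's formula gives |f - T_r f| <= 4 on [0, 1], so Q is bounded
   on [1/2, 1] independently of d, hence also on [-1, 1] since Q has fixed degree.  At
   x = -3rd, which lies in (-1/n, 0), T_r f(x) = d^r tau with tau = T_r phi(-3r) > 0, whereas
   x^(r+1) Q(x) = O(d^(r+1)); so P(x) > 0 for small d, contradicting P <= 0 there. *)

(** * Smooth functions *)

Definition smooth (f : R -> R) : Prop := forall k x, ex_derive_n f k x.

Lemma smooth_locally f n x : smooth f ->
  locally x (fun y => forall k, (k <= n)%nat -> ex_derive_n f k y).
Proof. intros Hf. apply filter_forall. intros y k _. apply Hf. Qed.

Lemma smooth_plus f g : smooth f -> smooth g -> smooth (fun x => f x + g x).
Proof. intros Hf Hg k x. apply ex_derive_n_plus; apply smooth_locally; assumption. Qed.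

Lemma smooth_minus f g : smooth f -> smooth g -> smooth (fun x => f x - g x).
Proof. intros Hf Hg k x. apply ex_derive_n_minus; apply smooth_locally; assumption. Qed.

Lemma smooth_scal a f : smooth f -> smooth (fun x => a * f x).
Proof. intros Hf k x. apply ex_derive_n_scal_l, Hf. Qed.

Lemma smooth_pow m : smooth (fun x => x ^ m).
Proof. intros k x. apply ex_derive_n_pow. Qed.

Lemma smooth_continuous f x : smooth f -> continuous f x.
Proof. intros Hf. apply (@ex_derive_continuous R_AbsRing R_NormedModule). exact (Hf 1%nat x). Qed.

Lemma smooth_Cr f r : smooth f -> Cr r f.
Proof.
  intros Hf. split.
  - intros k x _. apply Hf.
  - intros x. apply (@ex_derive_continuous R_AbsRing R_NormedModule). exact (Hf (S r) x).
Qed.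

Lemma Derive_n_plus_smooth f g k x : smooth f -> smooth g ->
  Derive_n (fun x => f x + g x) k x = Derive_n f k x + Derive_n g k x.
Proof. intros Hf Hg. apply Derive_n_plus; apply smooth_locally; assumption. Qed.

Lemma Derive_n_minus_smooth f g k x : smooth f -> smooth g ->
  Derive_n (fun x => f x - g x) k x = Derive_n f k x - Derive_n g k x.
Proof. intros Hf Hg. apply Derive_n_minus; apply smooth_locally; assumption. Qed.

Lemma Derive_n_sin_shift th k u :
  Derive_n (fun u => sin (u - th)) k u = sin (u - th + INR k * (PI / 2)).
Proof.
  revert u; induction k as [|k IH]; intros u.
  - simpl. rewrite Rmult_0_l, Rplus_0_r. reflexivity.
  - simpl Derive_n. rewrite (Derive_ext _ _ _ IH).
    apply is_derive_unique. auto_derive; [exact I|].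
    rewrite S_INR, cos_sin, Rmult_1_l. f_equal. ring.
Qed.

Lemma smooth_sin_shift th : smooth (fun u => sin (u - th)).
Proof.
  intros [|k] u; [exact I|]. simpl.
  apply (ex_derive_ext (fun u => sin (u - th + INR k * (PI / 2)))).
  - intros v. symmetry. apply Derive_n_sin_shift.
  - auto_derive. exact I.
Qed.

Lemma smooth_rescale g d m : smooth g -> smooth (fun x => d ^ m * g (/ d * x)).
Proof.
  intros Hg k x. apply ex_derive_n_scal_l, ex_derive_n_comp_scal, smooth_locally, Hg.
Qed.

Lemma Derive_n_rescale g d m k x : smooth g ->
  Derive_n (fun x => d ^ m * g (/ d * x)) k x = d ^ m * (/ d) ^ k * Derive_n g k (/ d * x).
Proof.
  intros Hg. rewrite Derive_n_scal_l, Derive_n_comp_scal by apply smooth_locally, Hg.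
  symmetry. apply Rmult_assoc.
Qed.

(** * Polynomials *)

Lemma pow_le_one x k : 0 <= x <= 1 -> x ^ k <= 1.
Proof. intros Hx. rewrite <- (pow1 k). apply pow_incr, Hx. Qed.

Lemma poly_eval_S N a x : poly_eval (S N) a x = poly_eval N a x + a (S N) * x ^ S N.
Proof. reflexivity. Qed.

Lemma poly_eval_ext N a b x : (forall i, (i <= N)%nat -> a i = b i) ->
  poly_eval N a x = poly_eval N b x.
Proof. intros Hab. apply sum_eq. intros i Hi. rewrite Hab by exact Hi. reflexivity. Qed.

Lemma smooth_poly_eval N a : smooth (poly_eval N a).
Proof.
  induction N as [|N IH]; intros k x.
  - apply (ex_derive_n_ext (fun t => a 0%nat * t ^ 0)); [reflexivity|].
    apply smooth_scal, smooth_pow.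
  - apply (ex_derive_n_ext (fun t => poly_eval N a t + a (S N) * t ^ S N)); [reflexivity|].
    apply smooth_plus; [exact IH | apply smooth_scal, smooth_pow].
Qed.

Lemma Derive_n_poly_eval_gt N a i x : (N < i)%nat -> Derive_n (poly_eval N a) i x = 0.
Proof.
  intros Hi. induction N as [|N IH].
  - rewrite (Derive_n_ext _ (fun t => a 0%nat * t ^ 0)) by reflexivity.
    rewrite Derive_n_scal_l, Derive_n_pow_bigi by lia. ring.
  - rewrite (Derive_n_ext _ (fun t => poly_eval N a t + a (S N) * t ^ S N)) by reflexivity.
    rewrite Derive_n_plus_smooth by auto using smooth_poly_eval, smooth_scal, smooth_pow.
    rewrite IH, Derive_n_scal_l, Derive_n_pow_bigi by lia. ring.
Qed.

Lemma Derive_n_poly_eval_0 N a i : (i <= N)%nat ->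
  Derive_n (poly_eval N a) i 0 = a i * INR (fact i).
Proof.
  induction N as [|N IH]; intros Hi.
  - replace i with 0%nat by lia. unfold poly_eval. simpl. ring.
  - rewrite (Derive_n_ext _ (fun t => poly_eval N a t + a (S N) * t ^ S N)) by reflexivity.
    rewrite Derive_n_plus_smooth by auto using smooth_poly_eval, smooth_scal, smooth_pow.
    rewrite Derive_n_scal_l, Derive_n_pow.
    destruct (Compare_dec.le_dec i (S N)) as [_|]; [|lia].
    destruct (Nat.eq_dec i (S N)) as [->|Hne].
    + rewrite Derive_n_poly_eval_gt, Nat.sub_diag by lia.
      simpl (INR (fact 0)). simpl pow. field.
    + rewrite IH by lia. replace (S N - i)%nat with (S (N - i)) by lia.
      simpl pow. ring.
Qed.

Lemma poly_eval_rescale N c d m u : d <> 0 ->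
  poly_eval N (fun i => d ^ m * (/ d) ^ i * c i) (d * u) = d ^ m * poly_eval N c u.
Proof.
  intros Hd. unfold poly_eval. rewrite scal_sum. apply sum_eq. intros i _.
  rewrite Rpow_mult_distr.
  replace (d ^ m * (/ d) ^ i * c i * (d ^ i * u ^ i))
    with (d ^ m * c i * u ^ i * ((/ d) ^ i * d ^ i)) by ring.
  rewrite <- Rpow_mult_distr, Rinv_l, pow1 by exact Hd. ring.
Qed.

Lemma poly_eval_split N m a x : poly_eval (S N + m) a x =
  poly_eval N a x + x ^ S N * poly_eval m (fun j => a (j + S N)%nat) x.
Proof.
  induction m as [|m IH].
  - rewrite Nat.add_0_r. unfold poly_eval. simpl. ring.
  - rewrite Nat.add_succ_r, !poly_eval_S, IH.
    replace (S m + S N)%nat with (S (S N + m)) by lia.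
    replace (S (S N + m)) with (S N + S m)%nat at 2 by lia. rewrite pow_add. ring.
Qed.

Lemma poly_eval_horner m a x :
  poly_eval (S m) a x = a 0%nat + x * poly_eval m (fun j => a (S j)) x.
Proof.
  induction m as [|m IH].
  - unfold poly_eval. simpl. ring.
  - rewrite poly_eval_S, IH, (poly_eval_S m). simpl pow. ring.
Qed.

Lemma poly_eval_synthetic_division m a x0 : exists b, forall x,
  poly_eval (S m) a x = poly_eval (S m) a x0 + (x - x0) * poly_eval m b x.
Proof.
  revert a; induction m as [|m IH]; intros a.
  - exists (fun _ => a 1%nat). intros x. unfold poly_eval. simpl. ring.
  - destruct (IH (fun j => a (S j))) as [b Hb].
    exists (fun j => match j with 0%nat => poly_eval (S m) (fun j => a (S j)) x0 | S j => b j end).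
    intros x. rewrite (poly_eval_horner (S m) a x), (poly_eval_horner (S m) a x0), Hb.
    rewrite (poly_eval_horner m _ x). change (fun j => b j) with b. ring.
Qed.

Lemma poly_eval_quotient_bound m a b al d B : 0 < d ->
  (forall x, poly_eval (S m) a x = poly_eval (S m) a al + (x - al) * poly_eval m b x) ->
  (forall y, al <= y <= al + 2 * d -> Rabs (poly_eval (S m) a y) <= B) ->
  forall y, al + d <= y <= al + 2 * d -> Rabs (poly_eval m b y) <= 2 * B / d.
Proof.
  intros Hd Hb HB y Hy.
  assert (Hlin : Rabs ((y - al) * poly_eval m b y) <= 2 * B).
  { replace ((y - al) * poly_eval m b y) with (poly_eval (S m) a y - poly_eval (S m) a al)
      by (rewrite Hb; ring).
    pose proof (HB y ltac:(lra)). pose proof (HB al ltac:(lra)).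
    pose proof (Rabs_triang (poly_eval (S m) a y) (- poly_eval (S m) a al)) as Ht.
    rewrite Rabs_Ropp in Ht. unfold Rminus. lra. }
  rewrite Rabs_mult, (Rabs_pos_eq (y - al)) in Hlin by lra.
  apply (Rmult_le_reg_l d); [exact Hd|].
  replace (d * (2 * B / d)) with (2 * B) by (field; lra).
  pose proof (Rabs_pos (poly_eval m b y)). nra.
Qed.

(* Induction on the degree: dividing by [x - al] costs only a factor [2/d] on the right half
   of the interval, where [|x - al| >= d]. *)
Lemma poly_eval_extrapolation m al be L : al < be -> 0 <= L -> exists C, 0 <= C /\
  forall a B, (forall y, al <= y <= be -> Rabs (poly_eval m a y) <= B) ->
  forall x, Rabs x <= L -> Rabs (poly_eval m a x) <= C * B.
Proof.
  revert al; induction m as [|m IH]; intros al Hab HL.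
  - exists 1. split; [lra|]. intros a B HB x _.
    specialize (HB al ltac:(lra)). unfold poly_eval in *. simpl in *. lra.
  - set (d := (be - al) / 2).
    assert (Hd : 0 < d) by (unfold d; lra).
    destruct (IH (al + d) ltac:(unfold d; lra) HL) as [C1 [HC1 HIH]].
    set (K := L + Rabs al).
    assert (HK : 0 <= K) by (pose proof (Rabs_pos al); unfold K; lra).
    assert (HKC : 0 <= K * C1 * (2 / d))
      by (apply Rmult_le_pos; [nra | apply Rlt_le, Rdiv_lt_0_compat; lra]).
    exists (1 + K * C1 * (2 / d)). split; [lra|].
    intros a B HB x Hx.
    destruct (poly_eval_synthetic_division m a al) as [b Hb].
    assert (HBal : Rabs (poly_eval (S m) a al) <= B) by (apply HB; lra).
    assert (Hq : forall y, al + d <= y <= be -> Rabs (poly_eval m b y) <= 2 * B / d).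
    { replace be with (al + 2 * d) in HB |- * by (unfold d; field).
      exact (poly_eval_quotient_bound m a b al d B Hd Hb HB). }
    specialize (HIH b _ Hq x Hx).
    assert (Hxa : Rabs (x - al) <= K).
    { unfold Rminus, K. pose proof (Rabs_triang x (- al)). rewrite Rabs_Ropp in *. lra. }
    rewrite Hb. eapply Rle_trans; [apply Rabs_triang|]. rewrite Rabs_mult.
    assert (Rabs (x - al) * Rabs (poly_eval m b x) <= K * (C1 * (2 * B / d)))
      by (apply Rmult_le_compat; auto using Rabs_pos).
    replace ((1 + K * C1 * (2 / d)) * B) with (B + K * (C1 * (2 * B / d))) by (field; lra).
    lra.
Qed.

(** * Taylor polynomials *)

Definition taylor_coef (f : R -> R) (i : nat) : R := Derive_n f i 0 / INR (fact i).

Lemma taylor_coef_of_matching N a f r : (r <= N)%nat ->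
  (forall i, (i <= r)%nat -> Derive_n (poly_eval N a) i 0 = Derive_n f i 0) ->
  forall i, (i <= r)%nat -> a i = taylor_coef f i.
Proof.
  intros HrN Hmatch i Hi. unfold taylor_coef.
  rewrite <- Hmatch, Derive_n_poly_eval_0 by lia. field. apply INR_fact_neq_0.
Qed.

Lemma taylor_coef_rescale g d m i : smooth g ->
  taylor_coef (fun x => d ^ m * g (/ d * x)) i = d ^ m * (/ d) ^ i * taylor_coef g i.
Proof.
  intros Hg. unfold taylor_coef. rewrite Derive_n_rescale, Rmult_0_r by exact Hg.
  unfold Rdiv. ring.
Qed.

Lemma taylor_poly_rescale g d m N u : smooth g -> d <> 0 ->
  poly_eval N (taylor_coef (fun x => d ^ m * g (/ d * x))) (d * u)
  = d ^ m * poly_eval N (taylor_coef g) u.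
Proof.
  intros Hg Hd. rewrite <- poly_eval_rescale by exact Hd.
  apply poly_eval_ext. intros i _. apply taylor_coef_rescale, Hg.
Qed.

Lemma taylor_poly_error f r M y : smooth f -> (0 < r)%nat -> 0 < y ->
  (forall t, 0 <= t <= y -> Rabs (Derive_n f r t) <= M) ->
  Rabs (f y - poly_eval r (taylor_coef f) y) <= 2 * M * y ^ r / INR (fact r).
Proof.
  intros Hf Hr Hy HM. destruct r as [|m]; [lia|].
  destruct (Taylor_Lagrange f m 0 y Hy (fun t _ k _ => Hf k t)) as [z [Hz ->]].
  replace (sum_f_R0 _ m) with (poly_eval m (taylor_coef f) y).
  2: { apply sum_eq. intros i _. unfold taylor_coef. rewrite Rminus_0_r. field.
       apply INR_fact_neq_0. }
  pose proof (INR_fact_lt_0 (S m)) as Hfact.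
  set (c := y ^ S m / INR (fact (S m))).
  assert (Hc : 0 <= c) by (apply Rlt_le, Rdiv_lt_0_compat; [apply pow_lt|]; lra).
  rewrite poly_eval_S, Rminus_0_r. unfold taylor_coef.
  replace (_ - _) with (c * (Derive_n f (S m) z - Derive_n f (S m) 0))
    by (unfold c; field; lra).
  replace (2 * M * y ^ S m / INR (fact (S m))) with (c * (2 * M)) by (unfold c; field; lra).
  rewrite Rabs_mult, (Rabs_pos_eq c Hc). apply Rmult_le_compat_l; [exact Hc|].
  pose proof (Rabs_triang (Derive_n f (S m) z) (- Derive_n f (S m) 0)) as Ht.
  rewrite Rabs_Ropp in Ht. pose proof (HM z ltac:(lra)). pose proof (HM 0 ltac:(lra)).
  unfold Rminus. lra.
Qed.

Lemma taylor_poly_error_le f r M y : smooth f -> (0 < r)%nat -> 0 < y <= 1 ->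
  (forall t, Rabs (Derive_n f r t) <= M) ->
  Rabs (f y - poly_eval r (taylor_coef f) y) <= 2 * M.
Proof.
  intros Hf Hr Hy HM.
  eapply Rle_trans; [apply taylor_poly_error; auto; lra|].
  assert (Hfact : 1 <= INR (fact r)) by exact (le_INR 1 _ (lt_O_fact r)).
  pose proof (pow_le_one y r ltac:(lra)).
  assert (0 <= M) by (eapply Rle_trans; [apply Rabs_pos | apply (HM 0)]).
  apply (Rmult_le_reg_r (INR (fact r))); [lra|].
  unfold Rdiv. rewrite Rmult_assoc, Rinv_l by lra. nra.
Qed.

Lemma nonneg_of_flat h m : smooth h ->
  (forall j, (j <= m)%nat -> Derive_n h j 0 = 0) -> (forall z, 0 <= Derive_n h (S m) z) ->
  forall y, 0 <= y -> 0 <= h y.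
Proof.
  intros Hh Hflat Hpos y Hy.
  destruct (Req_dec y 0) as [->|Hy0].
  { pose proof (Hflat 0%nat (Nat.le_0_l m)) as H0. simpl in H0. lra. }
  destruct (Taylor_Lagrange h m 0 y ltac:(lra) (fun t _ k _ => Hh k t)) as [z [_ ->]].
  rewrite sum_eq_R0 by (intros i Hi; rewrite Hflat by exact Hi; ring).
  rewrite Rplus_0_l. apply Rmult_le_pos; [|apply Hpos].
  apply Rmult_le_pos; [apply pow_le; lra|]. apply Rlt_le, Rinv_0_lt_compat, INR_fact_lt_0.
Qed.

Lemma nonpos_of_flat_even h m : smooth h -> Nat.Even m ->
  (forall j, (j <= m)%nat -> Derive_n h j 0 = 0) -> (forall z, 0 <= Derive_n h (S m) z) ->
  forall y, y <= 0 -> h y <= 0.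
Proof.
  intros Hh [q ->] Hflat Hpos y Hy.
  set (g := fun t => - h (- t)).
  assert (Hg : smooth g).
  { intros k t. apply ex_derive_n_opp, ex_derive_n_comp_opp, smooth_locally, Hh. }
  assert (HDg : forall k t, Derive_n g k t = - ((-1) ^ k * Derive_n h k (- t))).
  { intros k t. unfold g. rewrite Derive_n_opp, Derive_n_comp_opp by apply smooth_locally, Hh.
    reflexivity. }
  enough (0 <= g (- y)) by (unfold g in *; rewrite Ropp_involutive in *; lra).
  apply (nonneg_of_flat g (2 * q)); [exact Hg | | | lra].
  - intros j Hj. rewrite HDg, Ropp_0, Hflat by exact Hj. ring.
  - intros z. rewrite HDg, pow_1_odd. specialize (Hpos (- z)). lra.
Qed.

(* Without an upper bound, [Lub_Rbar] is [p_infty] and [supnorm] collapses to [0]. *)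
Lemma supnorm_bounded g M : (forall x, -1 <= x <= 1 -> Rabs (g x) <= M) ->
  (forall x, -1 <= x <= 1 -> Rabs (g x) <= supnorm g) /\ supnorm g <= M.
Proof.
  intros HM. unfold supnorm.
  set (S := fun y => exists x, -1 <= x <= 1 /\ y = Rabs (g x)).
  destruct (Lub_Rbar_correct S) as [Hub Hlub].
  assert (HSM : Rbar_le (Lub_Rbar S) M) by (apply Hlub; intros y [x [Hx ->]]; apply HM, Hx).
  assert (HSg : forall x, -1 <= x <= 1 -> Rbar_le (Rabs (g x)) (Lub_Rbar S))
    by (intros x Hx; apply Hub; exists x; split; [exact Hx | reflexivity]).
  specialize (HSg 0) as HSg0.
  destruct (Lub_Rbar S); simpl in *;
    [split; [exact HSg | exact HSM] | contradiction | destruct (HSg0 ltac:(lra))].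
Qed.

Lemma supnorm_ub g : (forall x, continuous g x) ->
  forall x, -1 <= x <= 1 -> Rabs (g x) <= supnorm g.
Proof.
  intros Hg.
  destruct (continuity_ab_maj (fun x => Rabs (g x)) (-1) 1) as [xm [Hxm _]]; [lra | |].
  - intros c _. apply continuity_pt_filterlim, continuous_comp; [apply Hg | apply continuous_Rabs].
  - exact (proj1 (supnorm_bounded g _ Hxm)).
Qed.

Lemma supnorm_le_scaled_pointwise g h A M : (forall x, continuous g x) -> 0 <= A ->
  (forall x, -1 <= x <= 1 -> Rabs (h x) <= M) -> supnorm g <= A * supnorm h ->
  forall y, -1 <= y <= 1 -> Rabs (g y) <= A * M.
Proof.
  intros Hg HA HM Hgh y Hy.
  pose proof (proj2 (supnorm_bounded h M HM)).
  pose proof (supnorm_ub g Hg y Hy). nra.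
Qed.

(** * Polynomials matching a jet *)

Lemma poly_tail_bound N m a E :
  (forall y, 1/2 <= y <= 1 -> Rabs (poly_eval (S N + m) a y - poly_eval N a y) <= E) ->
  forall y, 1/2 <= y <= 1 -> Rabs (poly_eval m (fun j => a (j + S N)%nat) y) <= 2 ^ S N * E.
Proof.
  intros HE y Hy. specialize (HE y Hy).
  rewrite poly_eval_split in HE.
  replace (_ + _ - _) with (y ^ S N * poly_eval m (fun j => a (j + S N)%nat) y) in HE by ring.
  rewrite Rabs_mult, Rabs_pos_eq in HE by (apply pow_le; lra).
  assert (Hpow : 1 <= 2 ^ S N * y ^ S N).
  { rewrite <- Rpow_mult_distr. apply pow_R1_Rle. lra. }
  pose proof (Rabs_pos (poly_eval m (fun j => a (j + S N)%nat) y)).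
  assert (0 <= 2 ^ S N) by (apply pow_le; lra).
  nra.
Qed.

Lemma matching_poly_lower_bound f r n a M E C :
  smooth f -> (0 < r)%nat -> (r <= n)%nat -> 0 <= C ->
  (forall b B, (forall y, 1/2 <= y <= 1 -> Rabs (poly_eval (n - S r) b y) <= B) ->
     forall x, Rabs x <= 1 -> Rabs (poly_eval (n - S r) b x) <= C * B) ->
  (forall t, Rabs (Derive_n f r t) <= M) ->
  (forall y, 1/2 <= y <= 1 -> Rabs (f y - poly_eval n a y) <= E) ->
  (forall i, (i <= r)%nat -> a i = taylor_coef f i) ->
  forall x, Rabs x <= 1 ->
  poly_eval r a x - Rabs x ^ S r * (C * (2 ^ S r * (E + 2 * M))) <= poly_eval n a x.
Proof.
  intros Hf Hr Hrn HC0 HC HM HE Ha x Hx.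
  assert (HPr : forall y, poly_eval r a y = poly_eval r (taylor_coef f) y)
    by (intros y; apply poly_eval_ext, Ha).
  assert (Htaylor : forall y, 1/2 <= y <= 1 -> Rabs (f y - poly_eval r a y) <= 2 * M)
    by (intros y Hy; rewrite HPr; apply taylor_poly_error_le; auto; lra).
  assert (HEM : 0 <= E + 2 * M).
  { pose proof (Rle_trans _ _ _ (Rabs_pos _) (HE 1 ltac:(lra))).
    pose proof (Rle_trans _ _ _ (Rabs_pos _) (HM 0)). lra. }
  assert (HK : 0 <= Rabs x ^ S r * (C * (2 ^ S r * (E + 2 * M)))).
  { apply Rmult_le_pos; [apply pow_le, Rabs_pos|].
    apply Rmult_le_pos; [exact HC0|]. apply Rmult_le_pos; [apply pow_le; lra | exact HEM]. }
  destruct (Nat.eq_dec n r) as [->|Hnr]; [lra|].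
  replace n with (S r + (n - S r))%nat in HE |- * by lia.
  set (Q := poly_eval (n - S r) (fun j => a (j + S r)%nat)).
  assert (HQ : forall y, 1/2 <= y <= 1 -> Rabs (Q y) <= 2 ^ S r * (E + 2 * M)).
  { apply poly_tail_bound. intros y Hy.
    pose proof (Rabs_triang (f y - poly_eval r a y) (- (f y - poly_eval (S r + (n - S r)) a y))).
    rewrite Rabs_Ropp in *. specialize (HE y Hy). specialize (Htaylor y Hy).
    replace (poly_eval (S r + (n - S r)) a y - poly_eval r a y)
      with (f y - poly_eval r a y + - (f y - poly_eval (S r + (n - S r)) a y)) by ring.
    lra. }
  rewrite poly_eval_split. fold Q.
  assert (HQx : Rabs (x ^ S r * Q x) <= Rabs x ^ S r * (C * (2 ^ S r * (E + 2 * M)))).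
  { rewrite Rabs_mult, <- RPow_abs.
    apply Rmult_le_compat_l; [apply pow_le, Rabs_pos | exact (HC _ _ HQ x Hx)]. }
  pose proof (Rle_abs (- (x ^ S r * Q x))). rewrite Rabs_Ropp in *. lra.
Qed.

(** * The profile and its rescalings *)

Lemma cos_add_quad_nonneg u : 0 <= cos u + 4 / 9 * u ^ 2.
Proof.
  pose proof PI2_3_2. pose proof (COS_bound u).
  destruct (Rle_dec (Rabs u) (3 / 2)) as [Hu|Hu].
  - apply Rabs_le_between in Hu.
    assert (0 <= cos u) by (apply cos_ge_0; lra).
    pose proof (pow2_ge_0 u). lra.
  - assert (9 / 4 <= u ^ 2).
    { rewrite <- (pow2_abs u). apply Rnot_le_lt in Hu. nra. }
    lra.
Qed.

Section Profile.

Variable p : nat.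

(* The coefficient [8/9] of [u^r / r!] is below [1], making the r-th derivative
   [8/9 - cos u] negative at [0], and large enough that [cos u + 4/9 u^2 >= 0]. *)
Definition profile (u : R) : R :=
  sin (u - INR p * (PI / 2)) - poly_eval p (taylor_coef (fun v => sin (v - INR p * (PI / 2)))) u
  + 8 / (9 * INR (fact (3 + p))) * u ^ (3 + p).

Lemma profile_smooth : smooth profile.
Proof.
  apply smooth_plus; [apply smooth_minus|apply smooth_scal, smooth_pow].
  - apply smooth_sin_shift.
  - apply smooth_poly_eval.
Qed.

Lemma Derive_n_profile k u : Derive_n profile k u =
  sin (u - INR p * (PI / 2) + INR k * (PI / 2))
  - Derive_n (poly_eval p (taylor_coef (fun v => sin (v - INR p * (PI / 2))))) k u
  + 8 / (9 * INR (fact (3 + p))) * Derive_n (fun u => u ^ (3 + p)) k u.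
Proof.
  unfold profile.
  rewrite Derive_n_plus_smooth, Derive_n_minus_smooth, Derive_n_scal_l, Derive_n_sin_shift;
    auto using smooth_minus, smooth_scal, smooth_pow, smooth_sin_shift, smooth_poly_eval.
Qed.

Lemma Derive_n_profile_flat j : (j <= p)%nat -> Derive_n profile j 0 = 0.
Proof.
  intros Hj.
  rewrite Derive_n_profile, Derive_n_poly_eval_0, Derive_n_pow_smalli, pow_i by lia.
  unfold taylor_coef. rewrite Derive_n_sin_shift. field; repeat split; apply INR_fact_neq_0.
Qed.

Lemma Derive_n_profile_succ u : Derive_n profile (S p) u = cos u + 4 / 9 * u ^ 2.
Proof.
  rewrite Derive_n_profile, Derive_n_poly_eval_gt, Derive_n_pow_smalli by lia.
  replace (3 + p - S p)%nat with 2%nat by lia.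
  replace (u - INR p * (PI / 2) + INR (S p) * (PI / 2)) with (PI / 2 + u)
    by (rewrite S_INR; ring).
  rewrite <- cos_sin. simpl (INR (fact 2)). field; repeat split; apply INR_fact_neq_0.
Qed.

Lemma Derive_n_profile_SS_0 : Derive_n profile (2 + p) 0 = 0.
Proof.
  rewrite Derive_n_profile, Derive_n_poly_eval_gt, Derive_n_pow_smalli by lia.
  replace (0 - INR p * (PI / 2) + INR (2 + p) * (PI / 2)) with PI
    by (rewrite plus_INR; simpl; field).
  replace (3 + p - (2 + p))%nat with 1%nat by lia.
  rewrite sin_PI. ring.
Qed.

Lemma Derive_n_profile_top u : Derive_n profile (3 + p) u = 8 / 9 - cos u.
Proof.
  rewrite Derive_n_profile, Derive_n_poly_eval_gt, Derive_n_pow_smalli, Nat.sub_diag by lia.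
  replace (u - INR p * (PI / 2) + INR (3 + p) * (PI / 2)) with (u + 3 * (PI / 2))
    by (rewrite plus_INR; simpl; field).
  rewrite sin_plus, cos_3PI2, sin_3PI2, pow_O. change (INR (fact 0)) with 1.
  field. apply INR_fact_neq_0.
Qed.

Lemma profile_nonneg u : 0 <= u -> 0 <= profile u.
Proof.
  apply (nonneg_of_flat _ p profile_smooth Derive_n_profile_flat).
  intros z. rewrite Derive_n_profile_succ. apply cos_add_quad_nonneg.
Qed.

Lemma profile_nonpos u : Nat.Even p -> u <= 0 -> profile u <= 0.
Proof.
  intros Hp. apply (nonpos_of_flat_even _ p profile_smooth Hp Derive_n_profile_flat).
  intros z. rewrite Derive_n_profile_succ. apply cos_add_quad_nonneg.
Qed.

Lemma profile_taylor_value_pos : Nat.Even p ->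
  0 < poly_eval (3 + p) (taylor_coef profile) (- (3 * INR (3 + p))).
Proof.
  intros [q Hq].
  set (k := 3 * INR (3 + p)).
  set (F := INR (fact (S p))).
  pose proof (pos_INR p).
  assert (Hk : k = 3 * (INR p + 3)) by (unfold k; rewrite plus_INR; simpl; ring).
  assert (HF : 0 < F) by apply INR_fact_lt_0.
  assert (Hneg : forall m, Nat.Odd m -> (- k) ^ m = - k ^ m).
  { intros m [m' ->]. rewrite <- (Rmult_1_l k) at 1. rewrite Ropp_mult_distr_l, Rpow_mult_distr.
    rewrite Nat.add_1_r, pow_1_odd. ring. }
  assert (Hfact : INR (fact (3 + p)) = (INR p + 3) * (INR p + 2) * F).
  { unfold F. change (3 + p)%nat with (S (S (S p))).
    rewrite (fact_simpl (S (S p))), (fact_simpl (S p)), !mult_INR, !S_INR. ring. }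
  change (3 + p)%nat with (S (S (S p))) at 1. rewrite !poly_eval_S.
  replace (poly_eval p (taylor_coef profile) (- k)) with 0.
  2: { symmetry. apply sum_eq_R0. intros j Hj.
       unfold taylor_coef. rewrite Derive_n_profile_flat by exact Hj. unfold Rdiv. ring. }
  unfold taylor_coef.
  change (S (S p)) with (2 + p)%nat. change (S (2 + p)) with (3 + p)%nat.
  rewrite Derive_n_profile_succ, Derive_n_profile_SS_0, Derive_n_profile_top, cos_0.
  rewrite (Hneg (S p)) by (exists q; lia). rewrite (Hneg (3 + p)%nat) by (exists (S q); lia).
  replace (k ^ (3 + p)) with (k ^ S p * k ^ 2) by (rewrite <- pow_add; f_equal; lia).
  fold F. rewrite Hfact.
  match goal with |- 0 < ?e => replace e with (k ^ S p / (F * (INR p + 2))) end.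
  - apply Rdiv_lt_0_compat; [apply pow_lt | apply Rmult_lt_0_compat]; lra.
  - rewrite Hk. field. repeat split; try apply INR_fact_neq_0; lra.
Qed.

End Profile.

Definition rescaled_profile (p : nat) (d x : R) : R := d ^ (3 + p) * profile p (/ d * x).

Lemma rescaled_profile_smooth p d : smooth (rescaled_profile p d).
Proof. apply smooth_rescale, profile_smooth. Qed.

Lemma rescaled_profile_nonneg p d x : 0 < d -> 0 <= x -> 0 <= rescaled_profile p d x.
Proof.
  intros Hd Hx. apply Rmult_le_pos; [apply pow_le; lra|].
  apply profile_nonneg, Rmult_le_pos; [apply Rlt_le, Rinv_0_lt_compat|]; assumption.
Qed.

Lemma rescaled_profile_nonpos p d x : Nat.Even p -> 0 < d -> x <= 0 -> rescaled_profile p d x <= 0.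
Proof.
  intros Hp Hd Hx. unfold rescaled_profile.
  assert (profile p (/ d * x) <= 0).
  { apply profile_nonpos; [exact Hp|]. pose proof (Rinv_0_lt_compat d Hd). nra. }
  pose proof (pow_lt d (3 + p) Hd). nra.
Qed.

Lemma Derive_n_rescaled_profile_top_bound p d x : d <> 0 ->
  Rabs (Derive_n (rescaled_profile p d) (3 + p) x) <= 2.
Proof.
  intros Hd. unfold rescaled_profile.
  rewrite Derive_n_rescale, Derive_n_profile_top by apply profile_smooth.
  rewrite <- Rpow_mult_distr, Rinv_r, pow1, Rmult_1_l by exact Hd.
  pose proof (COS_bound (/ d * x)). apply Rabs_le. lra.
Qed.

Lemma rescaled_profile_matching_lower_bound p n a A C d u :
  (3 + p <= n)%nat -> 0 < A -> 0 <= C ->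
  (forall b B, (forall y, 1/2 <= y <= 1 -> Rabs (poly_eval (n - S (3 + p)) b y) <= B) ->
     forall x, Rabs x <= 1 -> Rabs (poly_eval (n - S (3 + p)) b x) <= C * B) ->
  0 < d -> Rabs (d * u) <= 1 ->
  (forall i, (i <= 3 + p)%nat ->
     Derive_n (poly_eval n a) i 0 = Derive_n (rescaled_profile p d) i 0) ->
  supnorm (fun x => rescaled_profile p d x - poly_eval n a x)
    <= A * supnorm (Derive_n (rescaled_profile p d) (3 + p)) ->
  d ^ (3 + p) * poly_eval (3 + p) (taylor_coef (profile p)) u
    - Rabs (d * u) ^ S (3 + p) * (C * (2 ^ S (3 + p) * (2 * A + 2 * 2)))
    <= poly_eval n a (d * u).
Proof.
  intros Hn HA HC0 HC Hd Hdu Hmatch Hsup.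
  assert (Hf : smooth (rescaled_profile p d)) by apply rescaled_profile_smooth.
  assert (HDf : forall t, Rabs (Derive_n (rescaled_profile p d) (3 + p) t) <= 2)
    by (intros t; apply Derive_n_rescaled_profile_top_bound; lra).
  assert (Hclose : forall y, -1 <= y <= 1 ->
    Rabs (rescaled_profile p d y - poly_eval n a y) <= A * 2).
  { apply (supnorm_le_scaled_pointwise _ (Derive_n (rescaled_profile p d) (3 + p)));
      [| lra | intros x _; apply HDf | exact Hsup].
    intros x. apply smooth_continuous, smooth_minus; [exact Hf | apply smooth_poly_eval]. }
  pose proof (taylor_coef_of_matching n a _ (3 + p) Hn Hmatch) as Ha.
  rewrite Rmult_comm in Hclose.
  eapply Rle_trans;
    [|exact (matching_poly_lower_bound _ (3 + p) n a 2 (2 * A) C Hf ltac:(lia) Hn HC0 HC HDf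
               (fun y Hy => Hclose y ltac:(lra)) Ha _ Hdu)].
  rewrite (poly_eval_ext _ a _ _ Ha).
  unfold rescaled_profile. rewrite taylor_poly_rescale by (apply profile_smooth || lra).
  lra.
Qed.

Lemma scaled_gap_pos m d k tau K : 0 < d -> 0 < tau -> 0 <= k ->
  d * (k ^ S m * K / tau) < 1 -> 0 < d ^ m * tau - (d * k) ^ S m * K.
Proof.
  intros Hd Htau Hk Hsmall.
  replace (d * (k ^ S m * K / tau)) with (d * k ^ S m * K / tau) in Hsmall by (field; lra).
  apply Rlt_div_l in Hsmall; [|exact Htau].
  rewrite Rpow_mult_distr, <- tech_pow_Rmult.
  pose proof (pow_lt d m Hd). nra.
Qed.

Lemma exists_small_pos u v : 0 <= u -> 0 <= v -> exists d, 0 < d /\ d * u < 1 /\ d * v < 1.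
Proof.
  intros Hu Hv. exists (/ (1 + u + v)).
  assert (Hd : 0 < / (1 + u + v)) by (apply Rinv_0_lt_compat; lra).
  assert (Hdd : / (1 + u + v) * (1 + u + v) = 1) by (field; lra).
  split; [exact Hd|]. split; nra.
Qed.

Theorem lemma3p13 (r : nat) (Hr : (3 <= r)%nat) (Hodd : Nat.Odd r)
  (n : nat) (Hn : (r <= n)%nat) (A : R) (HA : 0 < A) :
  exists f : R -> R,
    Cr r f /\
    (forall x, -1 <= x <= 0 -> f x <= 0) /\
    (forall x, 0 <= x <= 1 -> 0 <= f x) /\
    forall a : nat -> R,
      (forall x, - / INR n < x < 0 -> poly_eval n a x <= 0) ->
      (forall i, (i <= r)%nat ->
         Derive_n (poly_eval n a) i 0 = Derive_n f i 0) ->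
      supnorm (fun x => f x - poly_eval n a x) > A * supnorm (Derive_n f r).
Proof.
  assert (Hr3 : exists p, r = (3 + p)%nat /\ Nat.Even p).
  { destruct Hodd as [k Hk]. exists (r - 3)%nat. split; [lia | exists (k - 1)%nat; lia]. }
  destruct Hr3 as [p [-> Hp]].
  destruct (poly_eval_extrapolation (n - S (3 + p)) (1 / 2) 1 1) as [C [HC0 HC]]; [lra | lra |].
  set (K := C * (2 ^ S (3 + p) * (2 * A + 2 * 2))).
  set (k := 3 * INR (3 + p)).
  set (tau := poly_eval (3 + p) (taylor_coef (profile p)) (- k)).
  assert (Htau : 0 < tau) by exact (profile_taylor_value_pos p Hp).
  assert (Hk : 0 < k) by (apply Rmult_lt_0_compat; [lra | apply lt_0_INR; lia]).
  assert (Hn1 : 1 <= INR n) by (apply (le_INR 1); lia).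
  assert (HkK : 0 <= k ^ S (3 + p) * K / tau).
  { apply Rmult_le_pos; [|apply Rlt_le, Rinv_0_lt_compat, Htau].
    apply Rmult_le_pos; [apply pow_le; lra|]. apply Rmult_le_pos; [exact HC0|].
    apply Rmult_le_pos; [apply pow_le|]; lra. }
  destruct (exists_small_pos (k * INR n) _ ltac:(nra) HkK) as [d [Hd [Hdn HdK]]].
  exists (rescaled_profile p d).
  split; [apply smooth_Cr, rescaled_profile_smooth|].
  split; [intros x Hx; apply rescaled_profile_nonpos; [exact Hp | exact Hd | lra]|].
  split; [intros x Hx; apply rescaled_profile_nonneg; lra|].
  intros a Hneg Hmatch. apply Rnot_le_gt. intros Hsup.
  assert (Hdk : d * k < / INR n).
  { apply (Rmult_lt_reg_r (INR n)); [lra|]. rewrite Rinv_l by lra. lra. }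
  assert (Hdu : Rabs (d * - k) = d * k) by (rewrite Rabs_mult, Rabs_Ropp, !Rabs_pos_eq; lra).
  pose proof (rescaled_profile_matching_lower_bound p n a A C d (- k) Hn HA HC0 HC Hd
    ltac:(rewrite Hdu; nra) Hmatch Hsup) as Hlow.
  rewrite Hdu in Hlow. fold tau K in Hlow.
  pose proof (scaled_gap_pos (3 + p) d k tau K Hd Htau ltac:(lra) HdK).
  pose proof (Hneg (d * - k) ltac:(split; nra)).
  lra.
Qed.
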